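(* Let $(X,\mathcal{A},\mu)$ be a probability space and $\theta$ a measure-preserving endomorphism. Let $\varphi,\psi:X\to\mathbb{R}$ be bounded ceiling functions and let $A\subset X$ be a hole for which the escape rates $\rho(A,\varphi)$ and $\rho(A,\psi)$ exist. Then: (1) If $\varphi\le\psi$, then $\rho(A,\varphi)\ge\rho(A,\psi)$. (2) For all $\lambda>0$, $\rho(A,\lambda\varphi)=\lambda^{-1}\rho(A,\varphi)$. (3) If there is a bounded measurable $\chi:X\to\mathbb{R}$ with $\psi=\varphi+\chi\circ\theta-\chi$, then $\rho(A,\psi)=\rho(A,\varphi)$.
   Context: A ceiling function is a measurable $\varphi:X\to\mathbb{R}$ with $\inf\varphi>0$. $S_n\varphi=\sum_{k=0}^{n-1}\varphi\circ\theta^k$, $N_t^\varphi(x)=\min\{n\in\mathbb{N}_0:S_n\varphi(x)>t\}$. The special flow over $\theta$ under $\varphi$: $\overline{X}_\varphi=\{(x,s):0\le s<\varphi(x)\}$ with $\overline{\mu}_\varphi$ the restriction of $\mu\otimes$Lebesgue, $\Phi^\varphi_t(x,s)=(x,s+t)$ if $t<\varphi(x)-s$ and $\Phi^\varphi_t(x,s)=(\theta^{N-1}x,s+t-S_{N-1}\varphi(x))$, $N=N^\varphi_{s+t}(x)$, otherwise. A hole $A\subset X$ is a measurable set with $\bigcup_{n\ge0}\theta^{-n}(A)=X$ a.e. The escape rate $\rho(A,\varphi)$ is $\lim_{t\to\infty}-\frac1t\log\overline{\mu}_\varphi(\{(x,s)\in\overline{X}_\varphi:\forall\tau\in[0,t]:\Phi^\varphi_\tau(x,s)\notin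 A\times\mathbb{R}\})$ when the limit exists. *)

From HB Require Import structures.
From mathcomp Require Import all_boot all_order all_algebra.
From mathcomp Require Import all_classical all_reals all_analysis.
Set Implicit Arguments. Unset Strict Implicit. Unset Printing Implicit Defensive.
Import Order.TTheory GRing.Theory Num.Theory.
Import numFieldNormedType.Exports.
Local Open Scope classical_set_scope.
Local Open Scope ring_scope.

Section SpecialFlow.
Context {d : measure_display} {X : measurableType d} {R : realType}.

Definition ceiling (phi : X -> R) : Prop :=
  measurable_fun setT phi /\ exists c : R, 0 < c /\ forall x, c <= phi x.

Definition measure_preserving (mu : set X -> \bar R) (theta : X -> X) : Prop :=
  measurable_fun setT theta /\
  forall B, measurable B -> mu (theta @^-1` B) = mu B.

Definition birkhoff_sum (theta : X -> X) (phi : X -> R) (n : nat) (x : X) : R :=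
  \sum_(0 <= k < n) phi (iter k theta x).

(* N_t^phi(x) = min { n : S_n phi x > t } (0 if no such n: never happens
   for a ceiling function) *)
Definition hit_count (theta : X -> X) (phi : X -> R) (t : R) (x : X) : nat :=
  match pselect (exists n, t < birkhoff_sum theta phi n x) with
  | left h => ex_minn h
  | right _ => 0%N
  end.

Definition special_flow (theta : X -> X) (phi : X -> R) (t : R) (p : X * R)
  : X * R :=
  let x := p.1 in let s := p.2 in
  if t < phi x - s then (x, s + t)
  else let N := hit_count theta phi (s + t) x in
       (iter N.-1 theta x, s + t - birkhoff_sum theta phi N.-1 x).

Definition flow_space (phi : X -> R) : set (X * R) :=
  [set p | 0 <= p.2 /\ p.2 < phi p.1].

Definition flow_measure (mu : set X -> \bar R) (phi : X -> R)
  (B : set (X * R)) : \bar R :=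
  (mu \x (@lebesgue_measure R))%E (flow_space phi `&` B).

Definition survivor_set (theta : X -> X) (phi : X -> R) (A : set X) (t : R)
  : set (X * R) :=
  [set p | flow_space phi p /\
     forall tau, 0 <= tau <= t ->
       ~ (A `*` [set: R]) (special_flow theta phi tau p)].

Definition survival (mu : set X -> \bar R) (theta : X -> X) (phi : X -> R)
  (A : set X) (t : R) : R :=
  fine (flow_measure mu phi (survivor_set theta phi A t)).

Definition escape_fun (mu : set X -> \bar R) (theta : X -> X) (phi : X -> R)
  (A : set X) (t : R) : R :=
  - (t^-1 * ln (survival mu theta phi A t)).

Definition hole (mu : set X -> \bar R) (theta : X -> X) (A : set X) : Prop :=
  measurable A /\
  mu.-negligible (~` \bigcup_n ((iter n theta) @^-1` A)).

Definition escape_rate_exists (mu : set X -> \bar R) (theta : X -> X)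
  (phi : X -> R) (A : set X) : Prop :=
  (\forall t \near +oo%R, 0 < survival mu theta phi A t) /\
  cvg (escape_fun mu theta phi A t @[t --> +oo%R]).

Definition escape_rate (mu : set X -> \bar R) (theta : X -> X)
  (phi : X -> R) (A : set X) : R :=
  lim (escape_fun mu theta phi A t @[t --> +oo%R]).

End SpecialFlow.

From HB Require Import structures.
From mathcomp Require Import all_boot all_order all_algebra.
From mathcomp Require Import all_classical all_reals all_analysis.
From mathcomp Require Import measurable_realfun.
From mathcomp Require Import ring lra.
Set Implicit Arguments.
Unset Strict Implicit.
Unset Printing Implicit Defensive.
Import Order.TTheory GRing.Theory Num.Theory.
Import numFieldNormedType.Exports.
Local Open Scope classical_set_scope.
Local Open Scope ring_scope.

(** Unwinding the special flow, a point (x, s) of the phase space survives up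
   to time t iff θ^k x ∉ A for every k with S_k φ(x) <= s + t.  For φ <= ψ,
   and for ψ cohomologous to φ (so that S_k ψ - S_k φ is bounded by some K),
   this description yields, after a dilation s ↦ r s of the fibre coordinate
   (which multiplies the measure by r), an inclusion of the φ-survivors up to
   time t + K into the ψ-survivors up to time t; constant factors and bounded
   time shifts are invisible to -(1/t) log.  Replacing φ by λφ rescales time
   by λ, whence the factor λ^-1. *)

Section fibre_dilation.
Context {R : realType}.

Lemma lebesgue_measure_dilation (r : R) (B : set (measurableTypeR R)) :
  0 < r -> measurable B ->
  lebesgue_measure ((fun s : measurableTypeR R => r^-1 * s) @^-1` B) =
  (r%:E * lebesgue_measure B)%E.
Proof.
move=> r0 mB; pose f : measurableTypeR R -> measurableTypeR R := *%R r^-1.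
have mf : measurable_fun setT f by exact: mulrl_measurable.
have r'0 : 0 <= r^-1 by rewrite invr_ge0 ltW.
have -> : lebesgue_measure B = ((r^-1)%:E * lebesgue_measure (f @^-1` B))%E.
  refine (@lebesgue_measure_unique R
    (mscale (NngNum r'0) (pushforward lebesgue_measure f)) _ _ mB).
  move=> _ [[a b] _ <-].
  change (lebesgue_measure `]a, b]%classic =
    ((r^-1)%:E * lebesgue_measure (f @^-1` `]a, b]%classic))%E).
  have -> : f @^-1` `]a, b]%classic = `]r * a, r * b]%classic.
    by apply/seteqP; split => x /=; rewrite !in_itv /= ltr_pdivlMl // ler_pdivrMl.
  rewrite !lebesgue_measure_itv /= !lte_fin ltr_pM2l //.
  case: ifP => _; last by rewrite mule0.
  by rewrite -EFinD -EFinM mulrBr !mulrA mulVf ?gt_eqF // !mul1r.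
by rewrite muleA -EFinM divff ?gt_eqF // mul1e.
(* the measure structure of the pushforward depends on [mf] *)
Unshelve. exact: mf.
Qed.

Lemma measurable_fibre_dilation d (X : measurableType d) (r : R)
    (E : set (X * measurableTypeR R)) :
  measurable E -> measurable ((fun p => (p.1, r^-1 * p.2)) @^-1` E).
Proof.
move=> mE; rewrite -[X in measurable X]setTI.
have mg : measurable_fun setT
    (fun p : X * measurableTypeR R => (r^-1 * p.2 : measurableTypeR R)).
  apply: (@measurableT_comp _ _ _ _ _ _ ( *%R r^-1 : measurableTypeR R -> _)).
    exact: mulrl_measurable.
  exact: measurable_snd.
exact: (measurable_fun_pair measurable_fst mg) measurableT E mE.
Qed.

Lemma product_measure1_fibre_dilation d (X : measurableType d)
    (mu : {measure set X -> \bar R}) (r : R) (E : set (X * measurableTypeR R)) :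
  0 < r -> measurable E ->
  (mu \x lebesgue_measure)%E ((fun p => (p.1, r^-1 * p.2)) @^-1` E) =
  (r%:E * (mu \x lebesgue_measure) E)%E.
Proof.
move=> r0 mE; rewrite /product_measure1 /= -ge0_integralZl //.
- apply: eq_integral => x _ /=.
  by rewrite -lebesgue_measure_dilation //; exact: measurable_xsection.
- exact: measurable_fun_xsection mE.
- by rewrite lee_fin ltW.
Qed.

Lemma fine_EFinM_gt0 (r : R) (e : \bar R) :
  0 < r -> fine (r%:E * e)%E = r * fine e.
Proof.
move=> r0; case: e => [x||] //=; rewrite ?mulr0 //.
  by rewrite mulry gtr0_sg // mul1e.
by rewrite mulrNy gtr0_sg // mul1e.
Qed.

End fibre_dilation.

Section birkhoff_sum.
Context {d : measure_display} {X : measurableType d} {R : realType}.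
Variable theta : X -> X.
Implicit Types (phi psi chi : X -> R).

Lemma birkhoff_sum0 phi x : birkhoff_sum theta phi 0 x = 0.
Proof. by rewrite /birkhoff_sum big_geq. Qed.

Lemma birkhoff_sumS phi n x : birkhoff_sum theta phi n.+1 x =
  birkhoff_sum theta phi n x + phi (iter n theta x).
Proof. by rewrite /birkhoff_sum big_nat_recr. Qed.

Lemma ler_birkhoff_sum phi psi n x : (forall y, phi y <= psi y) ->
  birkhoff_sum theta phi n x <= birkhoff_sum theta psi n x.
Proof. by move=> le_phi_psi; apply: ler_sum => k _. Qed.

Lemma birkhoff_sumZ phi (lambda : R) n x :
  birkhoff_sum theta (fun y => lambda * phi y) n x =
  lambda * birkhoff_sum theta phi n x.
Proof. by rewrite /birkhoff_sum mulr_sumr. Qed.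

Lemma birkhoff_sum_coboundary phi psi chi n x :
  (forall y, psi y = phi y + chi (theta y) - chi y) ->
  birkhoff_sum theta psi n x =
  birkhoff_sum theta phi n x + chi (iter n theta x) - chi x.
Proof.
move=> psiE; elim: n => [|n IHn]; first by rewrite !birkhoff_sum0 add0r subrr.
by rewrite !birkhoff_sumS IHn psiE iterS; ring.
Qed.

Lemma birkhoff_sum_coboundary_dist phi psi chi : bounded_fun chi ->
  (forall y, psi y = phi y + chi (theta y) - chi y) ->
  exists2 K, 0 <= K &
    forall n x, `|birkhoff_sum theta psi n x - birkhoff_sum theta phi n x| <= K.
Proof.
move=> /ex_strict_bound_gt0 [B B0 chiB] psiE; exists (B + B).
  by rewrite addr_ge0 // ltW.
move=> n x; rewrite (birkhoff_sum_coboundary n x psiE) ler_norml.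
have := chiB x I; have := chiB (iter n theta x) I; rewrite /= !ltr_norml; lra.
Qed.

Definition orbit_survivors phi (A : set X) (t : R) : set (X * R) :=
  [set p | flow_space phi p /\
     forall k, birkhoff_sum theta phi k p.1 <= p.2 + t -> ~ A (iter k theta p.1)].

Lemma orbit_survivors_dilation_sub phi psi (A : set X) (r K t : R) :
  0 < r <= 1 -> (forall y, r * phi y <= psi y) ->
  (forall n x, birkhoff_sum theta phi n x <= birkhoff_sum theta psi n x + K) ->
  (fun p => (p.1, r^-1 * p.2)) @^-1` orbit_survivors phi A (t + K)
    `<=` orbit_survivors psi A t.
Proof.
move=> /andP [r0 r1] r_phi_psi phi_psi [x s] [[s0 s_phi] avoid].
rewrite /= in s0 s_phi avoid.
have s_ge0 : 0 <= s by move: s0; rewrite pmulr_rge0 ?invr_gt0.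
have s_le : s <= r^-1 * s by rewrite ler_peMl // invf_ge1.
split; first split => //.
  apply: lt_le_trans (r_phi_psi x).
  by rewrite -ltr_pdivrMl // mulrC.
move=> k Sk; apply: avoid.
by rewrite (le_trans (phi_psi k x)) // addrA lerD2r (le_trans Sk) // lerD2r.
Qed.

Lemma orbit_survivors_scale phi (A : set X) (lambda t : R) : 0 < lambda ->
  orbit_survivors (fun y => lambda * phi y) A t =
  (fun p => (p.1, lambda^-1 * p.2)) @^-1` orbit_survivors phi A (t / lambda).
Proof.
move=> l0; apply/seteqP; split => -[x s];
  rewrite /orbit_survivors /flow_space /= => -[[s0 s_phi] avoid].
- split; first by split; [rewrite mulr_ge0 // invr_ge0 ltW | rewrite ltr_pdivrMl].
  move=> k Sk; apply: avoid; rewrite birkhoff_sumZ.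
  by rewrite -ler_pdivlMl // mulrDr (mulrC _ t).
- split.
    by split; [move: s0; rewrite pmulr_rge0 ?invr_gt0 | rewrite -ltr_pdivrMl].
  move=> k; rewrite birkhoff_sumZ => Sk; apply: avoid.
  by rewrite (mulrC t) -mulrDr ler_pdivlMl.
Qed.

End birkhoff_sum.

Section hit_count.
Context {d : measure_display} {X : measurableType d} {R : realType}.
Variables (theta : X -> X) (phi : X -> R) (c : R).
Hypotheses (c_gt0 : 0 < c) (phi_ge : forall y, c <= phi y).

Lemma birkhoff_sum_ge n x : n%:R * c <= birkhoff_sum theta phi n x.
Proof.
elim: n => [|n IHn]; first by rewrite birkhoff_sum0 mul0r.
by rewrite birkhoff_sumS -natr1 mulrDl mul1r lerD.
Qed.

Lemma birkhoff_sum_lt m n x : (m < n)%N ->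
  birkhoff_sum theta phi m x < birkhoff_sum theta phi n x.
Proof.
have phi_gt0 y : 0 < phi y by exact: lt_le_trans (phi_ge y).
elim: n => [//|n IHn]; rewrite ltnS leq_eqVlt => /orP [/eqP ->|/IHn lt_mn].
  by rewrite birkhoff_sumS ltrDl.
by rewrite birkhoff_sumS (lt_trans lt_mn) // ltrDl.
Qed.

Lemma birkhoff_sum_le m n x : (m <= n)%N ->
  birkhoff_sum theta phi m x <= birkhoff_sum theta phi n x.
Proof.
by rewrite leq_eqVlt => /orP [/eqP ->//|/(@birkhoff_sum_lt _ _ x) /ltW].
Qed.

Lemma exists_birkhoff_sum_gt u x : exists n, u < birkhoff_sum theta phi n x.
Proof.
exists (Num.bound (`|u| / c)).
apply: le_lt_trans (ler_norm u) (lt_le_trans _ (birkhoff_sum_ge _ _)).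
by rewrite -ltr_pdivrMr // archi_boundP // divr_ge0 // ltW.
Qed.

Lemma hit_countP u x : 0 <= u ->
  [/\ (0 < hit_count theta phi u x)%N,
      u < birkhoff_sum theta phi (hit_count theta phi u x) x &
      forall m, (m < hit_count theta phi u x)%N -> birkhoff_sum theta phi m x <= u].
Proof.
move=> u0; rewrite /hit_count.
case: pselect => [ex_n|/(_ (exists_birkhoff_sum_gt u x))//].
case: ex_minnP => N u_lt min_N; split => //.
- by rewrite lt0n; apply: contraTneq u_lt => ->; rewrite birkhoff_sum0 -leNgt.
- by move=> m lt_mN; rewrite leNgt; apply: contraTN lt_mN => /min_N; rewrite -leqNgt.
Qed.

Lemma hit_countE u x k : birkhoff_sum theta phi k x <= u ->
  u < birkhoff_sum theta phi k.+1 x -> hit_count theta phi u x = k.+1.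
Proof.
move=> le_u lt_u.
have u0 : 0 <= u.
  by rewrite (le_trans _ le_u) // -(birkhoff_sum0 theta phi x) birkhoff_sum_le.
have [_ lt_N le_N] := @hit_countP u x u0.
apply/eqP; rewrite eqn_leq; apply/andP; split.
  by rewrite leqNgt; apply: contraTN lt_u => /le_N; rewrite -leNgt.
rewrite ltnNge; apply: contraTN lt_N => /(@birkhoff_sum_le _ _ x) le_Sk.
by rewrite -leNgt (le_trans le_Sk).
Qed.

Lemma special_flow_fst p tau : flow_space phi p -> 0 <= tau ->
  (special_flow theta phi tau p).1 =
  iter (hit_count theta phi (p.2 + tau) p.1).-1 theta p.1.
Proof.
move=> [s0 s_phi] tau0; rewrite /special_flow; case: ifP => // lt_tau.
rewrite (@hit_countE _ _ 0) // ?birkhoff_sum0 ?addr_ge0 //.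
by rewrite birkhoff_sumS birkhoff_sum0 add0r addrC -ltrBrDr.
Qed.

Lemma survivor_setE (A : set X) t : 0 <= t ->
  survivor_set theta phi A t = orbit_survivors theta phi A t.
Proof.
move=> t0; apply/seteqP; split => p [[s0 s_phi] avoid]; split => //.
- move=> k le_Sk Ak; pose u := Num.max (birkhoff_sum theta phi k p.1) p.2.
  have u_s0 : 0 <= u - p.2 by rewrite subr_ge0 le_max lexx orbT.
  have hit_u : hit_count theta phi (p.2 + (u - p.2)) p.1 = k.+1.
    rewrite addrC subrK; apply: hit_countE; first by rewrite le_max lexx.
    rewrite gt_max birkhoff_sum_lt //=.
    apply: lt_le_trans s_phi (le_trans _ (birkhoff_sum_le _ (ltn0Sn k))).
    by rewrite birkhoff_sumS birkhoff_sum0 add0r.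
  apply: (avoid (u - p.2)); first by rewrite u_s0 lerBlDl ge_max le_Sk lerDl.
  by split => //; rewrite (@special_flow_fst p (u - p.2)) // hit_u.
- move=> tau /andP [tau0 tau_t] [+ _]; rewrite special_flow_fst //.
  have [N0 _ le_N] := @hit_countP _ p.1 (addr_ge0 s0 tau0).
  apply: avoid; apply: le_trans (le_N _ _) _; first by rewrite prednK.
  by rewrite lerD2l.
Qed.

End hit_count.

Section measurability.
Context {d : measure_display} {X : measurableType d} {R : realType}.
Local Notation XR := (X * measurableTypeR R)%type.
Variables (theta : X -> X) (phi : X -> R).
Hypotheses (mtheta : measurable_fun setT theta) (mphi : measurable_fun setT phi).

Lemma measurable_iter k : measurable_fun setT (iter k theta).
Proof.
elim: k => [|k IHk]; first exact: measurable_id.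
exact: measurableT_comp mtheta IHk.
Qed.

Lemma measurable_birkhoff_sum k : measurable_fun setT (birkhoff_sum theta phi k).
Proof.
elim: k => [|k IHk].
  have -> : birkhoff_sum theta phi 0 = cst 0.
    by apply/funext => x; exact: birkhoff_sum0.
  exact: measurable_cst.
have -> : birkhoff_sum theta phi k.+1 =
    birkhoff_sum theta phi k \+ (phi \o iter k theta).
  by apply/funext => x; rewrite birkhoff_sumS.
by apply: measurable_funD => //; exact: measurableT_comp mphi (measurable_iter k).
Qed.

Lemma measurable_orbit_survivors (A : set X) t :
  measurable A -> measurable (orbit_survivors theta phi A t : set XR).
Proof.
move=> mA.
have mlt (f g : XR -> R) : measurable_fun setT f -> measurable_fun setT g ->
    measurable [set p | f p < g p].
  by move=> mf mg; rewrite -[X in measurable X]setTI; exact: measurable_fun_ltr.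
have mle (f g : XR -> R) : measurable_fun setT f -> measurable_fun setT g ->
    measurable [set p | f p <= g p].
  by move=> mf mg; rewrite -[X in measurable X]setTI; exact: measurable_fun_ler.
have -> : orbit_survivors theta phi A t =
    [set p : XR | 0 <= p.2] `&` [set p | p.2 < phi p.1] `&`
    \bigcap_k ([set p | p.2 + t < birkhoff_sum theta phi k p.1] `|`
               (fun p => iter k theta p.1) @^-1` ~` A).
  apply/seteqP; split => p [[s0 s_phi] avoid]; split => //.
    move=> k _ /=; have [Sk|Sk] := leP (birkhoff_sum theta phi k p.1) (p.2 + t).
      by right; exact: avoid.
    by left.
  by move=> k Sk; have [|//] := avoid k I; rewrite /= ltNge Sk.
apply: measurableI; first apply: measurableI.
- exact: mle (measurable_cst _) measurable_snd.
- exact: mlt measurable_snd (measurableT_comp mphi measurable_fst).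
- apply: bigcapT_measurable => k; apply: measurableU.
    apply: mlt; first exact: measurable_funD measurable_snd (measurable_cst _).
    exact: measurableT_comp (measurable_birkhoff_sum k) measurable_fst.
  rewrite -[X in measurable X]setTI.
  exact: (measurableT_comp (measurable_iter k) measurable_fst)
    measurableT _ (measurableC mA).
Qed.

End measurability.

Section log_decay.
Context {R : realType}.

Definition log_decay (h : R -> R) (t : R) : R := - (t^-1 * ln (h t)).

Lemma cvgy_invr0 : t^-1 @[t --> +oo] --> (0 : R).
Proof.
apply/(@gtr0_cvgV0 R _ _ _ id); last exact: cvg_id.
exact: nbhs_pinfty_gt (num_real _).
Qed.

Lemma near_pinfty_shift (P : R -> Prop) (K : R) :
  (\forall t \near +oo, P t) -> \forall t \near +oo, P (t + K).
Proof. by move=> P_near; exact: (cvg_addrr K P_near). Qed.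

Lemma lim_log_decay_le (f g : R -> R) (r K : R) : 0 < r -> 0 <= K ->
  (\forall t \near +oo, 0 < g t) ->
  (\forall t \near +oo, r * g (t + K) <= f t) ->
  cvg (log_decay g t @[t --> +oo]) -> cvg (log_decay f t @[t --> +oo]) ->
  lim (log_decay f t @[t --> +oo]) <= lim (log_decay g t @[t --> +oo]).
Proof.
move=> r0 K0 g_gt0 le_gf cvg_g cvg_f; set l := lim (log_decay g t @[t --> +oo]).
(* Eventually [log_decay f t <= - (t^-1 * ln (r * g (t + K))) = H t], and the
   shift by [K] does not change the limit of [H]. *)
pose H t := - (t^-1 * ln r) + (1 + K * t^-1) * log_decay g (t + K).
have H_cvg : H t @[t --> +oo] --> l.
  rewrite -[l](_ : - (0 * ln r) + (1 + K * 0) * l = l); last first.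
    by rewrite mul0r oppr0 add0r mulr0 addr0 mul1r.
  have ln_r_cvg : t^-1 * ln r @[t --> +oo] --> 0 * ln r.
    by apply: cvgM; [exact: cvgy_invr0 | exact: cvg_cst].
  have factor_cvg : 1 + K * t^-1 @[t --> +oo] --> 1 + K * 0.
    apply: cvgD; first exact: cvg_cst.
    by apply: cvgM; [exact: cvg_cst | exact: cvgy_invr0].
  have shift_cvg : log_decay g (t + K) @[t --> +oo] --> l.
    by rewrite (cvg_shiftr K (log_decay g)).
  exact: cvgD (cvgN ln_r_cvg) (cvgM factor_cvg shift_cvg).
rewrite -(cvg_lim _ H_cvg) //; apply: ler_lim => //; first by apply/cvg_ex; exists l.
have g_gt0K := near_pinfty_shift K g_gt0.
near=> t.
have t0 : 0 < t by near: t; exact: nbhs_pinfty_gt (num_real _).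
have g0 : 0 < g (t + K) by near: t.
have le_gf_t : r * g (t + K) <= f t by near: t.
have -> : H t = - (t^-1 * ln (r * g (t + K))).
  rewrite /H /log_decay lnM ?posrE // mulrDr opprD; congr (_ + _).
  by field; rewrite ?gt_eqF ?ltr_wpDr.
rewrite lerN2 ler_pM2l ?invr_gt0 // ler_ln ?posrE ?mulr_gt0 //.
exact: lt_le_trans (mulr_gt0 r0 g0) le_gf_t.
Unshelve. all: end_near.
Qed.

Lemma log_decay_dilation (f g : R -> R) (lambda : R) : 0 < lambda ->
  (forall t, 0 <= t -> g t = lambda * f (t / lambda)) ->
  (\forall t \near +oo, 0 < f t) -> cvg (log_decay f t @[t --> +oo]) ->
  (\forall t \near +oo, 0 < g t) /\
  log_decay g t @[t --> +oo] --> lambda^-1 * lim (log_decay f t @[t --> +oo]).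
Proof.
move=> l0 gE f_gt0 cvg_f.
have div_cvgy : (t / lambda) @[t --> +oo] --> +oo.
  apply/cvgryPge => M; near=> t.
  rewrite ler_pdivlMr //; near: t; exact: nbhs_pinfty_ge (num_real _).
have f_gt0_div : \forall t \near +oo, 0 < f (t / lambda).
  by have := div_cvgy _ f_gt0; exact.
have t_gt0 : \forall t \near +oo, 0 < (t : R) by exact: nbhs_pinfty_gt (num_real _).
split.
  by near=> t; rewrite gE ?mulr_gt0 ?ltW //; near: t.
set l := lim (log_decay f t @[t --> +oo]).
have ln_lambda_cvg : t^-1 * ln lambda @[t --> +oo] --> 0 * ln lambda.
  by apply: cvgM; [exact: cvgy_invr0 | exact: cvg_cst].
have f_div_cvg : log_decay f (t / lambda) @[t --> +oo] --> l.
  exact: cvg_comp div_cvgy cvg_f.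
have sum_cvg : - (t^-1 * ln lambda) + lambda^-1 * log_decay f (t / lambda)
    @[t --> +oo] --> - (0 * ln lambda) + lambda^-1 * l.
  exact: cvgD (cvgN ln_lambda_cvg) (cvgM (cvg_cst lambda^-1) f_div_cvg).
rewrite mul0r oppr0 add0r in sum_cvg; apply: cvg_trans sum_cvg.
apply: near_eq_cvg; near=> t.
have t0 : 0 < t by near: t.
have f0 : 0 < f (t / lambda) by near: t.
rewrite /log_decay gE ?ltW // lnM ?posrE //.
by field; rewrite !gt_eqF.
Unshelve. all: end_near.
Qed.

End log_decay.

Section escape_rate.
Context {d : measure_display} {X : measurableType d} {R : realType}.
Variables (mu : {measure set X -> \bar R}) (theta : X -> X).
Hypothesis mtheta : measurable_fun setT theta.
Local Notation XR := (X * measurableTypeR R)%type.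
Implicit Types (phi psi chi : X -> R) (A : set X).

Lemma ceilingZ phi (lambda : R) : 0 < lambda -> ceiling phi ->
  ceiling (fun x => lambda * phi x).
Proof.
move=> l0 [mphi [c [c0 phi_ge]]]; split.
  exact: measurable_funM (measurable_cst _) mphi.
by exists (lambda * c); split => [|y]; rewrite ?mulr_gt0 ?ler_pM2l.
Qed.

Lemma exists_dilation_le phi psi : bounded_fun phi -> ceiling psi ->
  exists2 r : R, 0 < r <= 1 & forall y, r * phi y <= psi y.
Proof.
move=> /ex_strict_bound_gt0 [M M0 phiM] [_ [c [c0 psi_ge]]].
have Mc0 : 0 < M + c by rewrite addr_gt0.
exists (c / (M + c)).
  by rewrite divr_gt0 //= ler_pdivrMr // mul1r lerDr ltW.
move=> y; apply: le_trans (psi_ge y); apply: (@le_trans _ _ (c / (M + c) * M)).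
  by rewrite ler_pM2l ?divr_gt0 // (le_trans (ler_norm _)) // ltW // phiM.
by rewrite mulrAC ler_pdivrMr // ler_pM2l // lerDl ltW.
Qed.

Lemma survivalE phi A t : ceiling phi -> 0 <= t ->
  survival mu theta phi A t =
  fine ((mu \x lebesgue_measure)%E (orbit_survivors theta phi A t)).
Proof.
move=> [_ [c [c0 phi_ge]]] t0; rewrite /survival /flow_measure.
by rewrite (survivor_setE theta c0 phi_ge) // setIidr // => p [].
Qed.

Lemma survival_dilation_le phi psi A (r K : R) :
  ceiling phi -> ceiling psi -> measurable A -> 0 < r -> 0 <= K ->
  (forall t, 0 <= t -> (fun p : XR => (p.1, r^-1 * p.2)) @^-1`
     orbit_survivors theta phi A (t + K) `<=` orbit_survivors theta psi A t) ->
  (\forall t \near +oo, 0 < survival mu theta phi A t) ->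
  (\forall t \near +oo, 0 < survival mu theta psi A t) ->
  \forall t \near +oo,
    r * survival mu theta phi A (t + K) <= survival mu theta psi A t.
Proof.
move=> cphi cpsi mA r0 K0 sub_phi_psi pos_phi pos_psi.
have fin_of_gt0 (e : \bar R) : (0 <= e)%E -> 0 < fine e -> e \is a fin_num.
  by case: e => [x||] //= _; rewrite ltxx.
have pos_phiK := near_pinfty_shift K pos_phi.
apply: (filterS3 _ _ pos_phiK pos_psi (nbhs_pinfty_ge (num_real 0))).
move=> t phi_t psi_t t0.
rewrite (survivalE A cpsi t0) in psi_t *.
have tK0 : 0 <= t + K by rewrite addr_ge0.
rewrite (survivalE A cphi tK0) in phi_t *.
have fin_phi : (mu \x lebesgue_measure)%E (orbit_survivors theta phi A (t + K))
    \is a fin_num by apply: fin_of_gt0 phi_t; exact: measure_ge0.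
have fin_psi : (mu \x lebesgue_measure)%E (orbit_survivors theta psi A t)
    \is a fin_num by apply: fin_of_gt0 psi_t; exact: measure_ge0.
have [mphi _] := cphi; have [mpsi _] := cpsi.
have mS_phi := measurable_orbit_survivors mtheta mphi (t + K) mA.
have mS_psi := measurable_orbit_survivors mtheta mpsi t mA.
rewrite -(fine_EFinM_gt0 _ r0); apply: fine_le.
- by apply: fin_numM; [by [] | exact: fin_phi].
- exact: fin_psi.
rewrite -(product_measure1_fibre_dilation mu r0 mS_phi).
apply: le_measure; last exact: sub_phi_psi.
- by rewrite inE; exact: measurable_fibre_dilation.
- by rewrite inE.
Qed.

Lemma escape_rate_le_of_birkhoff_sum_le phi psi A (r K : R) :
  ceiling phi -> ceiling psi -> measurable A ->
  0 < r <= 1 -> 0 <= K -> (forall y, r * phi y <= psi y) ->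
  (forall n x, birkhoff_sum theta phi n x <= birkhoff_sum theta psi n x + K) ->
  escape_rate_exists mu theta phi A -> escape_rate_exists mu theta psi A ->
  escape_rate mu theta psi A <= escape_rate mu theta phi A.
Proof.
move=> cphi cpsi mA r01 K0 r_phi_psi phi_psi [pos_phi cvg_phi] [pos_psi cvg_psi].
have /andP [r0 _] := r01.
apply: (lim_log_decay_le r0 K0 pos_phi _ cvg_phi cvg_psi).
apply: survival_dilation_le => // t _.
exact: orbit_survivors_dilation_sub.
Qed.

Lemma escape_rate_scale phi A (lambda : R) :
  ceiling phi -> measurable A -> 0 < lambda -> escape_rate_exists mu theta phi A ->
  escape_rate_exists mu theta (fun x => lambda * phi x) A /\
  escape_rate mu theta (fun x => lambda * phi x) A =
    lambda^-1 * escape_rate mu theta phi A.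
Proof.
move=> cphi mA l0 [pos_phi cvg_phi].
have survivalZ t : 0 <= t -> survival mu theta (fun x => lambda * phi x) A t =
    lambda * survival mu theta phi A (t / lambda).
  move=> t0; have tl0 : 0 <= t / lambda by rewrite divr_ge0 // ltW.
  rewrite (survivalE A (ceilingZ l0 cphi) t0) (survivalE A cphi tl0).
  rewrite orbit_survivors_scale //.
  rewrite product_measure1_fibre_dilation ?fine_EFinM_gt0 //.
  by apply: measurable_orbit_survivors mA => //; case: cphi.
have [pos_phiZ cvg_phiZ] := log_decay_dilation l0 survivalZ pos_phi cvg_phi.
have rate_cvg : escape_fun mu theta (fun x => lambda * phi x) A t @[t --> +oo]
    --> lambda^-1 * escape_rate mu theta phi A := cvg_phiZ.
split; last exact: cvg_lim rate_cvg.
split; first exact: pos_phiZ.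
by apply/cvg_ex; exists (lambda^-1 * escape_rate mu theta phi A).
Qed.

Lemma escape_rate_coboundary phi psi chi A :
  ceiling phi -> bounded_fun phi -> ceiling psi -> bounded_fun psi ->
  measurable A -> bounded_fun chi ->
  (forall y, psi y = phi y + chi (theta y) - chi y) ->
  escape_rate_exists mu theta phi A -> escape_rate_exists mu theta psi A ->
  escape_rate mu theta psi A = escape_rate mu theta phi A.
Proof.
move=> cphi bphi cpsi bpsi mA bchi psiE ephi epsi.
have [K K0 dist_phi_psi] := birkhoff_sum_coboundary_dist bchi psiE.
have [r r01 r_phi_psi] := exists_dilation_le bphi cpsi.
have [r' r'01 r_psi_phi] := exists_dilation_le bpsi cphi.
apply: le_anti; apply/andP; split.
  apply: escape_rate_le_of_birkhoff_sum_le r01 K0 r_phi_psi _ ephi epsi => //.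
  by move=> n x; have := dist_phi_psi n x; rewrite ler_norml; lra.
apply: escape_rate_le_of_birkhoff_sum_le r'01 K0 r_psi_phi _ epsi ephi => //.
by move=> n x; have := dist_phi_psi n x; rewrite ler_norml; lra.
Qed.

End escape_rate.

Theorem proposition3p11 (d : measure_display) (X : measurableType d)
  (R : realType) (mu : probability X R) (theta : X -> X)
  (phi psi : X -> R) (A : set X) :
  measure_preserving mu theta ->
  ceiling phi -> bounded_fun phi ->
  ceiling psi -> bounded_fun psi ->
  hole mu theta A ->
  escape_rate_exists mu theta phi A ->
  escape_rate_exists mu theta psi A ->
  [/\ (forall x, phi x <= psi x) ->
        escape_rate mu theta psi A <= escape_rate mu theta phi A,
      forall lambda : R, 0 < lambda ->
        escape_rate_exists mu theta (fun x => lambda * phi x) A /\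
        escape_rate mu theta (fun x => lambda * phi x) A
          = lambda^-1 * escape_rate mu theta phi A
    & forall chi : X -> R, measurable_fun setT chi -> bounded_fun chi ->
        (forall x, psi x = phi x + chi (theta x) - chi x) ->
        escape_rate mu theta psi A = escape_rate mu theta phi A].
Proof.
move=> [mtheta _] cphi bphi cpsi bpsi [mA _] ephi epsi; split.
- move=> le_phi_psi; have r01 : 0 < (1 : R) <= 1 by rewrite ltr01 lexx.
  apply: (escape_rate_le_of_birkhoff_sum_le mtheta cphi cpsi mA r01 (lexx 0)
    _ _ ephi epsi).
    by move=> y; rewrite mul1r.
  by move=> n x; rewrite addr0 ler_birkhoff_sum.
- by move=> lambda l0; apply: (escape_rate_scale mtheta cphi mA l0 ephi).
- move=> chi _ bchi psiE.
  apply: (escape_rate_coboundary mtheta cphi bphi cpsi bpsi mA bchi psiE ephi epsi).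
Qed.
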